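(* The following three conditions are equivalent: (i) $\lim_{|x|\to\infty}\int_{x-a}^{x+a}q(t)\,dt=\infty$ for every $a\in(0,\infty)$; (ii) $\lim_{|x|\to\infty}d_1(x)=0$; (iii) $\lim_{|x|\to\infty}d_2(x)=0$.
   Context: Let $q:\mathbb R\to\mathbb R$ be measurable with $q\in L_1^{\mathrm{loc}}(\mathbb R)$ and $q(x)\ge1$ a.e. For each $x\in\mathbb R$, $d_1(x)$, $d_2(x)$ are the unique positive solutions $d$ of, respectively, $$1=\int_0^{\sqrt2 d}\int_{x-t}^{x}q(\xi)\,d\xi\,dt,\qquad 1=\int_0^{\sqrt2 d}\int_{x}^{x+t}q(\xi)\,d\xi\,dt.$$ *)

From HB Require Import structures.
From mathcomp Require Import all_boot all_order all_algebra.
From mathcomp Require Import all_classical all_reals all_analysis.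
Set Implicit Arguments. Unset Strict Implicit. Unset Printing Implicit Defensive.
Import Order.TTheory GRing.Theory Num.Theory.
Import numFieldNormedType.Exports.
Local Open Scope classical_set_scope.
Local Open Scope ring_scope.
Local Open Scope ereal_scope.

Definition Ileft (R : realType) (q : R -> R) (x t : R) : \bar R :=
  \int[@lebesgue_measure R]_(xi in `[(x - t)%R, x]) (q xi)%:E.
Definition Iright (R : realType) (q : R -> R) (x t : R) : \bar R :=
  \int[@lebesgue_measure R]_(xi in `[x, (x + t)%R]) (q xi)%:E.

Definition F1 (R : realType) (q : R -> R) (x d : R) : \bar R :=
  \int[@lebesgue_measure R]_(t in `[0%R, (Num.sqrt 2 * d)%R]) Ileft q x t.
Definition F2 (R : realType) (q : R -> R) (x d : R) : \bar R :=
  \int[@lebesgue_measure R]_(t in `[0%R, (Num.sqrt 2 * d)%R]) Iright q x t.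

Definition is_d1 (R : realType) (q : R -> R) (x d : R) : Prop :=
  (0 < d)%R /\ F1 q x d = 1.
Definition is_d2 (R : realType) (q : R -> R) (x d : R) : Prop :=
  (0 < d)%R /\ F2 q x d = 1.

Definition window_int (R : realType) (q : R -> R) (a x : R) : \bar R :=
  \int[@lebesgue_measure R]_(t in `[(x - a)%R, (x + a)%R]) (q t)%:E.

From HB Require Import structures.
From mathcomp Require Import all_boot all_order all_algebra.
From mathcomp Require Import all_classical all_reals all_analysis.
From mathcomp Require Import measurable_realfun lra.
Import Order.TTheory GRing.Theory Num.Theory.
Import numFieldNormedType.Exports.
Local Open Scope classical_set_scope.
Local Open Scope ring_scope.

(* Write G(x, t) for the integral of q over [x - t, x] (resp. [x, x + t]).  As
   t |-> G(x, t) is nonnegative and nondecreasing, the equation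
   1 = int_0^s G(x, t) dt with s = √2 d(x) gives (s/2) G(x, s/2) <= 1 <= s G(x, s).
   Moreover G(x, t) is at most the window integral of any radius a >= t centred
   at x, and is itself the window integral of radius t/2 centred at x - t/2
   (resp. x + t/2).  So d(x) -> 0 forces every window integral to blow up, and
   conversely; the shift by t/2 is harmless since x ± t/2 -> ±∞ together with x. *)

Section nondecreasing_integral.
Context {R : realType}.
Local Notation mu := (@lebesgue_measure R).

Lemma lebesgue_measure_itv_cc (a b : R) : a <= b -> mu `[a, b] = (b - a)%:E.
Proof.
rewrite lebesgue_measure_itv /= lte_fin le_eqVlt => /orP[/eqP->|->//].
by rewrite ltxx subrr.
Qed.

Lemma measurable_fun_nondecreasing_fin_num (g : R -> \bar R) :
  (forall t, g t \is a fin_num) -> {homo g : s t / s <= t >-> (s <= t)%E} ->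
  measurable_fun setT g.
Proof.
move=> gfin gnd; have -> : g = EFin \o (fine \o g).
  by apply/funext => t /=; rewrite fineK.
apply/measurable_EFinP; apply: nondecreasing_measurable => // s t st.
by apply: fine_le; [exact: gfin | exact: gfin | exact: gnd].
Qed.

Variable f : R -> \bar R.
Hypothesis f_mf : measurable_fun setT f.
Hypothesis f_ge0 : forall t, (0 <= f t)%E.
Hypothesis f_nd : {homo f : s t / s <= t >-> (s <= t)%E}.

Lemma nondecreasing_integral_itv_le (a b : R) : a <= b ->
  (\int[mu]_(t in `[a, b]) f t <= f b * (b - a)%:E)%E.
Proof.
move=> ab; rewrite -lebesgue_measure_itv_cc // -integral_cst //.
apply: ge0_le_integral => //; first exact: measurable_funS f_mf.
by move=> t; rewrite /= in_itv /= => /andP[_]; exact: f_nd.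
Qed.

Lemma nondecreasing_integral_itv_ge (a b : R) : a <= b ->
  (f a * (b - a)%:E <= \int[mu]_(t in `[a, b]) f t)%E.
Proof.
move=> ab; rewrite -lebesgue_measure_itv_cc // -integral_cst //.
apply: ge0_le_integral => //.
- by move=> t _; exact: f_ge0.
- exact: measurable_funS f_mf.
- by move=> t; rewrite /= in_itv /= => /andP[+ _]; exact: f_nd.
Qed.

End nondecreasing_integral.

Section window_solution.
Context {R : realType}.
Local Notation mu := (@lebesgue_measure R).

(* W a x stands for the window integral over [x - a, x + a] and G x t for a
   one-sided integral of length t at x; sg is -1 on the left and 1 on the right. *)
Variables (W G : R -> R -> \bar R) (sg : R).
Hypothesis G_mf : forall x, measurable_fun setT (G x).
Hypothesis G_ge0 : forall x t, (0 <= G x t)%E.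
Hypothesis G_nd : forall x, {homo G x : s t / s <= t >-> (s <= t)%E}.
Hypothesis G_le_W : forall x t a, 0 <= t -> t <= a -> (G x t <= W a x)%E.
Hypothesis W_le_G : forall x c, 0 < c -> (W (c / 2) (x + sg * (c / 2)) <= G x c)%E.

Variable F : set_system R.
Hypothesis F_filter : Filter F.
Hypothesis F_shift : forall b : R, (x + b) @[x --> F] --> F.

Variable d : R -> R.
Hypothesis d_gt0 : forall x, 0 < d x.
Hypothesis d_solves : forall x,
  (\int[mu]_(t in `[0%R, (Num.sqrt 2 * d x)%R]) G x t = 1)%E.

Lemma solution_cvg0_of_window_cvgy :
  (forall a, 0 < a -> W a x @[x --> F] --> +oo%E) -> d x @[x --> F] --> 0.
Proof.
move=> W_cvgy; apply/cvgrPdist_lt => e e_gt0.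
have s2_gt0 : 0 < Num.sqrt 2 :> R by rewrite sqrtr_gt0.
set c := Num.sqrt 2 * e / 2.
have c_gt0 : 0 < c by rewrite divr_gt0 ?mulr_gt0.
have c2_gt0 : 0 < c / 2 by lra.
have /cvgeyPge/(_ (2 / c)) W_large := W_cvgy (c / 2) c2_gt0.
have W_shifted : \forall x \near F, ((2 / c)%:E <= W (c / 2) (x + sg * (c / 2)))%E.
  exact: F_shift W_large.
apply: filterS W_shifted => x W_ge.
rewrite sub0r normrN ger0_norm ?(ltW (d_gt0 x)) // ltNge; apply/negP => le_ed.
(* If d x >= e, then G x >= G x c >= 2 / c on [c, 2c] ⊆ [0, √2 d x], so the
   defining integral would be at least 2. *)
have G_int_ge : (G x c * c%:E <= 1)%E.
  have c_le_2c : c <= c + c by rewrite lerDl ltW.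
  have := nondecreasing_integral_itv_ge _ (G_mf x) (G_ge0 x) (G_nd x) _ _ c_le_2c.
  rewrite addrK => /le_trans; apply; rewrite -(d_solves x).
  apply: ge0_subset_integral => //; first exact: measurable_funS (G_mf x).
  move=> t /=; rewrite !in_itv /= => /andP[ct tc].
  rewrite (le_trans (ltW c_gt0) ct) /=; apply: (le_trans tc).
  by rewrite -splitr ler_wpM2l // ltW.
have : ((2 / c)%:E * c%:E <= 1)%E.
  apply: le_trans G_int_ge; apply: lee_wpmul2r; first by rewrite lee_fin ltW.
  by apply: (le_trans W_ge); exact: W_le_G.
by rewrite -EFinM lee_fin divfK ?gt_eqF //; lra.
Qed.

Lemma window_cvgy_of_solution_cvg0 :
  d x @[x --> F] --> 0 -> forall a, 0 < a -> W a x @[x --> F] --> +oo%E.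
Proof.
move=> d_cvg0 a a_gt0; apply/cvgeyPge => A.
set B := Num.max A 1.
have B_gt0 : 0 < B by rewrite lt_max ltr01 orbT.
have A_le_B : A <= B by rewrite le_max lexx.
have s2_gt0 : 0 < Num.sqrt 2 :> R by rewrite sqrtr_gt0.
set m := Num.min a (1 / B).
have m_gt0 : 0 < m by rewrite lt_min a_gt0 divr_gt0.
move/cvgrPdist_lt: d_cvg0 => /(_ (m / Num.sqrt 2) (divr_gt0 m_gt0 s2_gt0)).
apply: filterS => x; rewrite sub0r normrN ger0_norm ?(ltW (d_gt0 x)) // => d_small.
set s := Num.sqrt 2 * d x.
have s_gt0 : 0 < s by rewrite mulr_gt0.
have s_lt_m : s < m by rewrite /s mulrC -ltr_pdivlMr.
have s_le_a : s <= a by apply/ltW/(lt_le_trans s_lt_m); rewrite ge_min lexx.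
have sB_lt1 : s * B < 1.
  by rewrite -ltr_pdivlMr //; apply: (lt_le_trans s_lt_m); rewrite ge_min lexx orbT.
(* Monotonicity of G x bounds the defining integral by W a x * s, so W a x >= 1 / s > B. *)
have W_s_ge1 : (1 <= W a x * s%:E)%E.
  have := nondecreasing_integral_itv_le _ (G_mf x) (G_ge0 x) (G_nd x) _ _ (ltW s_gt0).
  rewrite -(d_solves x) subr0 => /le_trans; apply.
  by apply: lee_wpmul2r; [rewrite lee_fin ltW | exact: G_le_W (ltW s_gt0) s_le_a].
have W_ge0 : (0 <= W a x)%E.
  by apply: le_trans (G_ge0 x s) _; exact: G_le_W (ltW s_gt0) s_le_a.
move: W_s_ge1 W_ge0; case: (W a x) => [w| |] // => [|_ _]; last exact: leey.
by rewrite -EFinM !lee_fin => ws_ge1 w_ge0; nra.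
Qed.

Lemma window_cvgy_iff_solution_cvg0 :
  (forall a, 0 < a -> W a x @[x --> F] --> +oo%E) <-> d x @[x --> F] --> 0.
Proof.
by split; [exact: solution_cvg0_of_window_cvgy | exact: window_cvgy_of_solution_cvg0].
Qed.

End window_solution.

Section itv_integral.
Context {R : realType} (q : R -> R).
Local Notation mu := (@lebesgue_measure R).
Hypothesis q_mf : measurable_fun setT q.
Hypothesis q_locint : locally_integrable setT q.
Hypothesis q_ae_ge0 : {ae mu, forall x, 0 <= q x}.

(* An everywhere nonnegative version of q, as required by the ge0 integral lemmas. *)
Let q0 x := Num.max (q x) 0.

Let q0_mf : measurable_fun setT q0.
Proof. exact: measurable_maxr q_mf (measurable_cst _). Qed.

Let q0_ge0 x : 0 <= q0 x. Proof. by rewrite le_max lexx orbT. Qed.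

Let itv_integral_q0 (a b : R) :
  (\int[mu]_(t in `[a, b]) (q t)%:E = \int[mu]_(t in `[a, b]) (q0 t)%:E)%E.
Proof.
apply: ae_eq_integral => //.
- by apply/measurable_EFinP; exact: measurable_funS q_mf.
- by apply/measurable_EFinP; exact: measurable_funS q0_mf.
- move: q_ae_ge0; apply: filterS; first exact: (ae_filter_ringOfSetsType mu).
  by move=> x qx_ge0 _; rewrite /q0 max_l.
Qed.

Lemma itv_integral_ge0 (a b : R) : (0 <= \int[mu]_(t in `[a, b]) (q t)%:E)%E.
Proof. by rewrite itv_integral_q0; apply: integral_ge0 => t _; rewrite lee_fin. Qed.

Lemma itv_integral_fin_num (a b : R) :
  (\int[mu]_(t in `[a, b]) (q t)%:E)%E \is a fin_num.
Proof.
case: q_locint => _ _ /(_ `[a, b]%classic (subsetT _) (@segment_compact _ a b)) q_int.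
by rewrite -integral_fin_num_abs //; exact: measurable_funS q_mf.
Qed.

Lemma le_itv_integral (a b c e : R) : c <= a -> b <= e ->
  (\int[mu]_(t in `[a, b]) (q t)%:E <= \int[mu]_(t in `[c, e]) (q t)%:E)%E.
Proof.
move=> ca be; rewrite !itv_integral_q0; apply: ge0_subset_integral => //.
- by apply/measurable_EFinP; exact: measurable_funS q0_mf.
- by move=> t _; rewrite lee_fin.
- move=> t; rewrite /= !in_itv /= => /andP[le_at le_tb].
  by rewrite (le_trans ca) ?(le_trans le_tb).
Qed.

Lemma measurable_Ileft (x : R) : measurable_fun setT (Ileft q x).
Proof.
apply: measurable_fun_nondecreasing_fin_num => [t|s t st]; first exact: itv_integral_fin_num.
by apply: le_itv_integral => //; rewrite lerB.
Qed.

Lemma measurable_Iright (x : R) : measurable_fun setT (Iright q x).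
Proof.
apply: measurable_fun_nondecreasing_fin_num => [t|s t st]; first exact: itv_integral_fin_num.
by apply: le_itv_integral => //; rewrite lerD.
Qed.

Variable F : set_system R.
Hypothesis F_filter : Filter F.
Hypothesis F_shift : forall b : R, (x + b) @[x --> F] --> F.

Lemma window_cvgy_iff_d1_cvg0 (d : R -> R) : (forall x, is_d1 q x (d x)) ->
  (forall a, 0 < a -> window_int q a x @[x --> F] --> +oo%E) <-> d x @[x --> F] --> 0.
Proof.
move=> d_solves.
apply: (@window_cvgy_iff_solution_cvg0 _ (window_int q) (Ileft q) (-1)) => //.
- exact: measurable_Ileft.
- by move=> x t; exact: itv_integral_ge0.
- by move=> x s t st; apply: le_itv_integral => //; rewrite lerB.
- by move=> x t a t_ge0 ta; apply: le_itv_integral; lra.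
- by move=> x c _; rewrite /window_int mulN1r subrK -addrA -opprD -splitr.
- by move=> x; exact: (d_solves x).1.
- by move=> x; exact: (d_solves x).2.
Qed.

Lemma window_cvgy_iff_d2_cvg0 (d : R -> R) : (forall x, is_d2 q x (d x)) ->
  (forall a, 0 < a -> window_int q a x @[x --> F] --> +oo%E) <-> d x @[x --> F] --> 0.
Proof.
move=> d_solves.
apply: (@window_cvgy_iff_solution_cvg0 _ (window_int q) (Iright q) 1) => //.
- exact: measurable_Iright.
- by move=> x t; exact: itv_integral_ge0.
- by move=> x s t st; apply: le_itv_integral => //; rewrite lerD.
- by move=> x t a t_ge0 ta; apply: le_itv_integral; lra.
- by move=> x c _; rewrite /window_int mul1r addrK -addrA -splitr.
- by move=> x; exact: (d_solves x).1.
- by move=> x; exact: (d_solves x).2.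
Qed.

End itv_integral.

Theorem lemma4p1 (R : realType) (q : R -> R) (d1 d2 : R -> R)
  (hqm : measurable_fun [set: R] q)
  (hqloc : locally_integrable [set: R] q)
  (hq1 : {ae @lebesgue_measure R, forall x, 1 <= q x})
  (hd1 : forall x, is_d1 q x (d1 x))
  (hd2 : forall x, is_d2 q x (d2 x)) :
  let cond_i := forall a : R, 0 < a ->
      (window_int q a x
         @[x --> +oo] --> +oo%E) /\
      (window_int q a x
         @[x --> -oo] --> +oo%E) in
  let cond_ii := (d1 x @[x --> +oo] --> 0) /\ (d1 x @[x --> -oo] --> 0) in
  let cond_iii := (d2 x @[x --> +oo] --> 0) /\ (d2 x @[x --> -oo] --> 0) in
  (cond_i <-> cond_ii) /\ (cond_ii <-> cond_iii).
Proof.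
move=> cond_i cond_ii cond_iii.
have q_ae_ge0 : {ae @lebesgue_measure R, forall x, 0 <= q x}.
  move: hq1; apply: filterS => [|x /(le_trans ler01)//].
  exact: (ae_filter_ringOfSetsType lebesgue_measure).
have d1_pinfty := window_cvgy_iff_d1_cvg0 _ hqm hqloc q_ae_ge0 _ _ (@cvg_addrr R) d1 hd1.
have d1_ninfty := window_cvgy_iff_d1_cvg0 _ hqm hqloc q_ae_ge0 _ _ (@cvg_addrr_Ny R) d1 hd1.
have d2_pinfty := window_cvgy_iff_d2_cvg0 _ hqm hqloc q_ae_ge0 _ _ (@cvg_addrr R) d2 hd2.
have d2_ninfty := window_cvgy_iff_d2_cvg0 _ hqm hqloc q_ae_ge0 _ _ (@cvg_addrr_Ny R) d2 hd2.
split; split.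
- by move=> hi; split; [apply/d1_pinfty | apply/d1_ninfty] => a /hi[].
- by move=> [/d1_pinfty hp /d1_ninfty hn] a a_gt0; split; [exact: hp | exact: hn].
- by move=> [hp hn]; split; [apply/d2_pinfty/d1_pinfty | apply/d2_ninfty/d1_ninfty].
- by move=> [hp hn]; split; [apply/d1_pinfty/d2_pinfty | apply/d1_ninfty/d2_ninfty].
Qed.
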